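(* The sequence $\{k^2+k+1\}_{k=0}^{\infty}$ is a Legendre multiplier sequence.
   Context: The Legendre polynomials $\mathfrak{Le}_n(x)$ are defined by $\frac{1}{\sqrt{1-2xt+t^2}}=\sum_{k=0}^{\infty}\mathfrak{Le}_k(x)t^k$. A real sequence $\{\gamma_k\}_{k=0}^{\infty}$ is a Legendre multiplier sequence if, for every $n$ and all real $a_0,\dots,a_n$, the polynomial $\sum_{k=0}^n a_k\gamma_k\mathfrak{Le}_k(x)$ has only real zeros whenever $\sum_{k=0}^n a_k\mathfrak{Le}_k(x)$ has only real zeros. *)

From HB Require Import structures.
From mathcomp Require Import all_boot all_order all_algebra.
From mathcomp Require Import reals.
From mathcomp Require Import complex.

Set Implicit Arguments.
Unset Strict Implicit.
Unset Printing Implicit Defensive.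

Import Order.TTheory GRing.Theory Num.Theory.
Local Open Scope ring_scope.

(* Legendre polynomial Le_n, defined as the coefficient of t^n in the expansion of
   1/sqrt(1 - 2xt + t^2) = (1 - u)^(-1/2) with u = 2xt - t^2:
     (1-u)^(-1/2) = sum_m C(2m,m)/4^m u^m,
     [t^n] (2xt - t^2)^m = [t^(n-m)] (2x - t)^m = C(m, n-m) (-1)^(n-m) (2x)^(2m-n).
   Terms with 2m < n vanish since then C(m, n-m) = 0. *)
Definition legendre (R : realType) (n : nat) : {poly R} :=
  \sum_(m < n.+1)
    ((('C(2 * m, m))%:R / (4 ^ m)%:R) * ('C(m, n - m))%:R * (-1) ^+ (n - m))
      *: (2%:R *: 'X) ^+ (2 * m - n).

Definition only_real_zeros (R : realType) (p : {poly R}) : Prop :=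
  forall z : R[i], root (map_poly (real_complex R) p) z -> complex.Im z = 0.

Definition legendre_multiplier_sequence (R : realType) (gamma : nat -> R) : Prop :=
  forall (n : nat) (a : nat -> R),
    only_real_zeros (\sum_(k < n.+1) a k *: legendre R k) ->
    only_real_zeros (\sum_(k < n.+1) (a k * gamma k) *: legendre R k).

(* The multiplier k^2 + k + 1 = 1 + k(k+1) acts on Legendre expansions as the
   operator T = 1 + L, where L p = (x^2 - 1) p'' + 2x p' is the Legendre
   differential operator, whose eigenvalue on Le_k is k(k+1).  So it suffices
   that T preserves real-rootedness.  Evaluated at a fixed point z, T factors as
   (1 + (z+1) D)(1 + (z-1) D).  If all zeros of f lie in the closed lower
   half-plane and Im c > 0, the same holds for f + c f' (Gauss-Lucas type
   argument: Im (f'(u)/f(u)) <= 0 in the open upper half-plane).  Applying this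
   twice with c = z - 1 and c = z + 1 shows that T p has no zero z with
   Im z > 0, and conjugation symmetry rules out Im z < 0. *)

From HB Require Import structures.
From mathcomp Require Import all_boot all_order all_algebra.
From mathcomp Require Import reals complex.
From mathcomp Require Import ring lra zify.
Import Order.TTheory GRing.Theory Num.Theory.
Local Open Scope ring_scope.

Section LegendreOperator.
Variable F : comNzRingType.

Definition legendre_op (p : {poly F}) : {poly F} :=
  ('X ^+ 2 - 1) * p^`()^`() + 'X *+ 2 * p^`().

Fact legendre_op_is_linear : linear legendre_op.
Proof.
move=> c p q; rewrite /legendre_op !derivD !derivZ !mulrDr -!scalerAr.
by rewrite scalerDr addrACA.
Qed.

HB.instance Definition _ :=
  GRing.isLinear.Build F {poly F} {poly F} _ legendre_op legendre_op_is_linear.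

Lemma legendre_opXn j :
  legendre_op 'X^j = (j * j.+1)%N%:R *: 'X^j - (j * j.-1)%N%:R *: 'X^(j.-2).
Proof.
rewrite /legendre_op derivXn derivMn derivXn -!scaler_nat.
by case: j => [|[|j]] /=; rewrite !scaler_nat ?mulrnA ?exprS ?expr0; ring.
Qed.
End LegendreOperator.

Arguments legendre_op {F}.

Lemma mul_bin_center m :
  ('C((2 * m).+2, m.+1) * m.+1 = 'C(2 * m, m) * (2 * m).+1 * 2)%N.
Proof.
have := mul_bin_diag (2 * m).+2 m; have := mul_bin_diag (2 * m).+1 m.
have -> : 'C((2 * m).+1, m.+1) = 'C((2 * m).+1, m).
  by rewrite -bin_sub; [congr 'C(_, _)|]; lia.
move=> /= mid top; rewrite mulnC -top; lia.
Qed.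

Lemma mul_bin_shift m e :
  ('C(m.+1, e) * ((m.+1 - e) * (m - e)) = 'C(m, e.+1) * m.+1 * e.+1)%N.
Proof.
have := mul_bin_down m.+1 e; have := mul_bin_left m e => /= left down.
rewrite mulnA [(_ * (m.+1 - e))%N]mulnC -down -mulnA [('C(m, e) * _)%N]mulnC -left.
ring.
Qed.

Section LegendreCoef.
Variable R : realType.

Definition legendre_coef (n m : nat) : R :=
  'C(2 * m, m)%:R / (4 ^ m)%:R * 'C(m, n - m)%:R * (-1) ^+ (n - m) * 2 ^+ (2 * m - n).

Lemma legendreE n :
  legendre R n = \sum_(m < n.+1) legendre_coef n m *: 'X^(2 * m - n).
Proof. by apply: eq_bigr => m _; rewrite exprZn scalerA. Qed.

Lemma legendre_coef_eq0 n m : (2 * m < n)%N -> legendre_coef n m = 0.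
Proof. by move=> ?; rewrite /legendre_coef (@bin_small m) ?mulr0 ?mul0r //; lia. Qed.

Lemma legendre_coef_rec k e :
  legendre_coef (k + 2 * e + 2) (k + e + 2) * (k.+2 * k.+1)%:R
  = legendre_coef (k + 2 * e + 2) (k + e + 1)
    * ((k * k.+1)%:R - ((k + 2 * e + 2) * (k + 2 * e + 2).+1)%:R).
Proof.
set n := (k + 2 * e + 2)%N; set m := (k + e + 1)%N; rewrite /legendre_coef.
have -> : (k + e + 2 = m.+1)%N by lia.
have -> : (2 * m.+1 = (2 * m).+2)%N by lia.
have -> : (n - m.+1 = e)%N by lia.
have -> : ((2 * m).+2 - n = k.+2)%N by lia.
have -> : (n - m = e.+1)%N by lia.
have -> : (2 * m - n = k)%N by lia.
have := congr1 (fun x => x%:R : R) (mul_bin_center m).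
have := congr1 (fun x => x%:R : R) (mul_bin_shift m e).
rewrite (_ : m.+1 - e = k.+2)%N; last by lia.
rewrite (_ : m - e = k.+1)%N; last by lia.
rewrite !natrM => shift center.
have m1_neq0 : m.+1%:R != 0 :> R by rewrite pnatr_eq0.
have k21_neq0 : k.+2%:R * k.+1%:R != 0 :> R by rewrite mulf_neq0 ?pnatr_eq0.
have -> : 'C((2 * m).+2, m.+1)%:R = 'C(2 * m, m)%:R * (2 * m).+1%:R * 2 / m.+1%:R :> R.
  by rewrite -center mulfK.
have -> : 'C(m.+1, e)%:R = 'C(m, e.+1)%:R * m.+1%:R * e.+1%:R / (k.+2%:R * k.+1%:R) :> R.
  by rewrite -shift mulfK.
rewrite !natrX !exprS.
have F_neq0 : 4%:R ^+ m != 0 :> R by rewrite expf_neq0 ?pnatr_eq0.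
move: F_neq0 m1_neq0; set F := (4%:R ^+ m : R); set t := (2 ^+ k : R); set s := ((-1) ^+ e : R).
rewrite /n /m => F_neq0 m1_neq0.
field; rewrite F_neq0 /=.
have k_ge0 := ler0n R k; have e_ge0 := ler0n R e.
by rewrite !lt0r_neq0 //; lra.
Qed.

(* legendre_op (c_m X^j) = n(n+1) c_m X^j + defect_m - lowered_m with
   j = 2m - n, and defect_m = lowered_(m+1): the sum over m telescopes. *)
Definition legendre_defect n m : {poly R} :=
  (legendre_coef n m * (((2 * m - n) * (2 * m - n).+1)%:R - (n * n.+1)%:R))
    *: 'X^(2 * m - n).

Definition legendre_lowered n m : {poly R} :=
  (legendre_coef n m * ((2 * m - n) * (2 * m - n).-1)%:R) *: 'X^((2 * m - n).-2).

Lemma legendre_op_term n m :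
  legendre_op (legendre_coef n m *: 'X^(2 * m - n))
  = (n * n.+1)%:R *: (legendre_coef n m *: 'X^(2 * m - n))
    + legendre_defect n m - legendre_lowered n m.
Proof.
rewrite linearZ /= legendre_opXn /legendre_defect /legendre_lowered.
by rewrite scalerBr !scalerA -scalerDl; congr (_ *: _ - _); ring.
Qed.

Lemma legendre_defect_shift n m :
  (m < n)%N -> legendre_defect n m = legendre_lowered n m.+1.
Proof.
move=> lt_mn; rewrite /legendre_defect /legendre_lowered.
have [le_n_2m | lt_2m_n] := leqP n (2 * m); last first.
  have j_le1 : (2 * m.+1 - n <= 1)%N by lia.
  have -> : ((2 * m.+1 - n) * (2 * m.+1 - n).-1 = 0)%N.
    by move: j_le1; case: (2 * m.+1 - n)%N => [|[|]].
  by rewrite legendre_coef_eq0 // mulr0 mul0r !scale0r.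
have [k [e [-> ->]]] : exists k e, n = (k + 2 * e + 2)%N /\ m = (k + e + 1)%N.
  by exists (2 * m - n)%N, (n - m.+1)%N; lia.
have -> : (2 * (k + e + 1) - (k + 2 * e + 2) = k)%N by lia.
have -> : (2 * (k + e + 1).+1 - (k + 2 * e + 2) = k.+2)%N by lia.
have -> : ((k + e + 1).+1 = k + e + 2)%N by lia.
by rewrite legendre_coef_rec.
Qed.

Lemma sum_legendre_defect n :
  \sum_(m < n.+1) legendre_defect n m = \sum_(m < n.+1) legendre_lowered n m.
Proof.
rewrite big_ord_recr big_ord_recl /=.
have -> : legendre_defect n n = 0.
  by rewrite /legendre_defect (_ : 2 * n - n = n)%N ?subrr ?mulr0 ?scale0r //; lia.
have -> : legendre_lowered n 0 = 0.
  by rewrite /legendre_lowered (_ : 2 * 0 - n = 0)%N ?mulr0 ?scale0r //; lia.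
rewrite addr0 add0r; apply: eq_bigr => m _.
exact: legendre_defect_shift (ltn_ord m).
Qed.

Lemma legendre_op_legendre n :
  legendre_op (legendre R n) = (n * n.+1)%:R *: legendre R n.
Proof.
rewrite legendreE linear_sum /= scaler_sumr.
under eq_bigr do rewrite legendre_op_term.
by rewrite sumrB big_split /= sum_legendre_defect addrK.
Qed.

End LegendreCoef.

Section LowerHalfPlane.
Variable R : realType.
Implicit Types (z u w c A B : R[i]) (f : {poly R[i]}).
Local Notation Re := (@complex.Re R).
Local Notation Im := (@complex.Im R).

Definition lower_rooted f : Prop := forall u, root f u -> Im u <= 0.

Lemma Im_conjc z : Im (conjc z) = - Im z.
Proof. by case: z. Qed.

Lemma Im_add_mul_conj A B w :
  Im ((A + w * B) * conjc (w * A))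
  = (Re w ^+ 2 + Im w ^+ 2) * Im (B * conjc A) - (Re A ^+ 2 + Im A ^+ 2) * Im w.
Proof. by case: A => ? ?; case: B => ? ?; case: w => ? ?; simpc; rewrite /=; ring. Qed.

Lemma Im_scale_mul_conj A B c :
  Im (c * B * conjc (c * A)) = (Re c ^+ 2 + Im c ^+ 2) * Im (B * conjc A).
Proof. by case: A => ? ?; case: B => ? ?; case: c => ? ?; simpc; rewrite /=; ring. Qed.

Lemma sqr_add_ge0 (x y : R) : 0 <= x ^+ 2 + y ^+ 2.
Proof. by rewrite addr_ge0 ?sqr_ge0. Qed.

Lemma Im_deriv_conj_prod_XsubC z (s : seq R[i]) :
  0 < Im z -> {in s, forall u, Im u <= 0} ->
  Im ((\prod_(u <- s) ('X - u%:P))^`().[z] * conjc (\prod_(u <- s) ('X - u%:P)).[z])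
  <= 0.
Proof.
move=> z_up; elim: s => [|u s IHs] s_low.
  by rewrite big_nil derivC horner0 mul0r.
have u_low : Im u <= 0 by apply: s_low; rewrite mem_head.
have IH := IHs (sub_in1 (@mem_behead _ (u :: s)) s_low).
rewrite big_cons derivM derivXsubC mul1r !hornerE Im_add_mul_conj.
have zu_up : 0 <= Im (z - u) by rewrite raddfB /=; lra.
rewrite subr_le0 (le_trans (mulr_ge0_le0 (sqr_add_ge0 _ _) IH)) //.
by rewrite mulr_ge0 ?sqr_add_ge0.
Qed.

Lemma Im_deriv_conj_le0 {f z} :
  0 < Im z -> lower_rooted f -> Im (f^`().[z] * conjc f.[z]) <= 0.
Proof.
move=> z_up f_low; have [->|f_neq0] := eqVneq f 0; first by rewrite deriv0 horner0 mul0r.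
have [s f_eq] := closed_field_poly_normal f.
have lc_neq0 : lead_coef f != 0 by rewrite lead_coef_eq0.
rewrite f_eq derivZ !hornerZ Im_scale_mul_conj mulr_ge0_le0 ?sqr_add_ge0 //.
apply: Im_deriv_conj_prod_XsubC => // u u_s; apply: f_low.
by rewrite f_eq rootZ // root_prod_XsubC.
Qed.

Lemma add_mul_neq0 {A B c} :
  0 < Im c -> A != 0 -> Im (B * conjc A) <= 0 -> A + c * B != 0.
Proof.
move=> c_up A_neq0 BA_low; apply: contraNneq A_neq0 => /eqP.
rewrite addr_eq0 => /eqP A_eq; move: BA_low; rewrite {A}A_eq oppr_eq0 mulf_eq0 orbC.
case: B => b1 b2; case: c c_up => c1 c2 /= c2_gt0; simpc; rewrite /=.
rewrite (_ : _ - _ = c2 * (b1 ^+ 2 + b2 ^+ 2)); last by ring.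
rewrite pmulr_rle0 // => sqr_le0.
have /eqP : b1 ^+ 2 + b2 ^+ 2 = 0 by apply/le_anti; rewrite sqr_le0 sqr_add_ge0.
by rewrite paddr_eq0 ?sqr_ge0 // !sqrf_eq0 eq_complex /= => ->.
Qed.

Lemma lower_rooted_add_deriv f c :
  0 < Im c -> lower_rooted f -> lower_rooted (f + c *: f^`()).
Proof.
move=> c_up f_low u root_u; rewrite leNgt; apply/negP => u_up.
have fu_neq0 : ~~ root f u by apply: contraTN u_up => /f_low; rewrite leNgt.
have := add_mul_neq0 c_up fu_neq0 (Im_deriv_conj_le0 u_up f_low).
by move: root_u; rewrite /root hornerD hornerZ => ->.
Qed.

End LowerHalfPlane.

Arguments lower_rooted {R}.

Lemma map_legendre_op (F G : comNzRingType) (f : {rmorphism F -> G}) (p : {poly F}) :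
  map_poly f (legendre_op p) = legendre_op (map_poly f p).
Proof.
rewrite /legendre_op rmorphD !rmorphM /= !deriv_map rmorphB rmorphMn /=.
by rewrite map_polyXn map_polyX rmorph1.
Qed.

Lemma horner_add_legendre_op (F : comNzRingType) (p : {poly F}) (z : F)
    (h := p + (z - 1) *: p^`()) :
  (p + legendre_op p).[z] = (h + (z + 1) *: h^`()).[z].
Proof.
by rewrite /h /legendre_op derivD derivZ !hornerD !hornerM !hornerZ !hornerMn !hornerD !hornerZ
  hornerX hornerXn hornerN hornerC; ring.
Qed.

Lemma only_real_zeros_add_legendre_op (R : realType) (q : {poly R}) :
  only_real_zeros q -> only_real_zeros (q + legendre_op q).
Proof.
move=> q_real z; set P := map_poly (real_complex R) q.
have P_low : lower_rooted P by move=> u /q_real ->.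
have no_upper_root w : 0 < complex.Im w -> ~~ root (P + legendre_op P) w.
  move=> w_up; rewrite /root horner_add_legendre_op.
  set h := P + (w - 1) *: P^`().
  have h_low : lower_rooted h by apply: lower_rooted_add_deriv; rewrite // raddfB /= subr0.
  have hw_low : lower_rooted (h + (w + 1) *: h^`()).
    by apply: lower_rooted_add_deriv => //; rewrite raddfD /= addr0.
  by apply: contraTN w_up => /hw_low; rewrite -leNgt.
rewrite rmorphD /= map_legendre_op -/P => z_root.
have [z_low | z_up | //] := ltgtP (complex.Im z) 0.
  have := no_upper_root (conjc z); rewrite Im_conjc oppr_gt0 z_low -complex_root_conj.
  rewrite rmorphD /= map_legendre_op /P -map_poly_comp.
  by rewrite (eq_map_poly (conjc_real (R := R))) -/P z_root => /(_ isT).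
by rewrite (negPf (no_upper_root z z_up)) in z_root.
Qed.

Theorem lemma4p7 (R : realType) :
  legendre_multiplier_sequence (fun k : nat => ((k ^ 2 + k + 1)%N)%:R : R).
Proof.
move=> n a q_real; set q := \sum_(k < n.+1) a k *: legendre R k.
suff -> : \sum_(k < n.+1) (a k * (k ^ 2 + k + 1)%:R) *: legendre R k = q + legendre_op q.
  exact: only_real_zeros_add_legendre_op.
rewrite linear_sum /= -big_split; apply: eq_bigr => k _ /=.
rewrite linearZ /= legendre_op_legendre scalerA -scalerDl.
rewrite (_ : k ^ 2 + k + 1 = k * k.+1 + 1)%N; last by lia.
by rewrite natrD mulrDr mulr1 addrC.
Qed.
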